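(* Let $f\in C^{1,1}_L(\mathbb{R}^n)$, let $\mathcal{Y}=\{y_1,\dots,y_{n+1}\}\subset\mathbb{R}^n$ be affinely independent, let $m$ be the affine function interpolating $f$ on $\mathcal{Y}$, and let $y_0\in\mathbb{R}^n$ with barycentric coordinates $\ell_1,\dots,\ell_{n+1}$ and $\ell_0=-1$. Then for every $u\in\mathbb{R}^n$, $$|m(y_0)-f(y_0)|\le \frac{L}{2}\sum_{i=0}^{n+1}|\ell_i|\,\|y_i-u\|^2 .$$
   Context: Let $n\ge1$ and $L>0$. $C^{1,1}_L(\mathbb{R}^n)$ denotes the set of differentiable functions $f:\mathbb{R}^n\to\mathbb{R}$ with $\|\nabla f(u_1)-\nabla f(u_2)\|\le L\|u_1-u_2\|$ for all $u_1,u_2\in\mathbb{R}^n$ (Euclidean norm). For an affinely independent set $\mathcal{Y}=\{y_1,\dots,y_{n+1}\}\subset\mathbb{R}^n$, the interpolating affine function $m$ is the unique affine $m:\mathbb{R}^n\to\mathbb{R}$ with $m(y_i)=f(y_i)$ for $i=1,\dots,n+1$. The barycentric coordinates of $y_0\in\mathbb{R}^n$ with respect to $\mathcal{Y}$ are the unique reals $\ell_1,\dots,\ell_{n+1}$ with $\sum_{i=1}^{n+1}\ell_i=1$ and $\sum_{i=1}^{n+1}\ell_iy_i=y_0$; one sets $\ell_0=-1$, so that $\sum_{i=0}^{n+1}\ell_i=0$, $\sum_{i=0}^{n+1}\ell_iy_i=0$, and $m(y_0)=\sum_{i=1}^{n+1}\ell_if(y_i)$. *)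

From HB Require Import structures.
From mathcomp Require Import all_boot all_order all_algebra.
From mathcomp Require Import all_classical all_reals.
From mathcomp Require Import topology normedtype derive.
Set Implicit Arguments. Unset Strict Implicit. Unset Printing Implicit Defensive.
Import Order.TTheory GRing.Theory Num.Theory.
Import numFieldNormedType.Exports.
Local Open Scope ring_scope.

Definition dotv {R : realType} {n : nat} (u v : 'rV[R]_n) : R :=
  \sum_(i < n) u ord0 i * v ord0 i.
Definition enorm {R : realType} {n : nat} (u : 'rV[R]_n) : R :=
  Num.sqrt (dotv u u).

Definition gradient {R : realType} {n : nat} (f : 'rV[R]_n -> R) (x : 'rV[R]_n)
  : 'rV[R]_n := \row_(i < n) ('d f x) (delta_mx ord0 i).

Definition C11 {R : realType} {n : nat} (L : R) (f : 'rV[R]_n -> R) : Prop :=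
  (forall x, differentiable f x) /\
  (forall u1 u2, enorm (gradient f u1 - gradient f u2) <= L * enorm (u1 - u2)).

Definition affinely_independent {R : realType} {n : nat} (y : 'I_n.+1 -> 'rV[R]_n)
  : Prop :=
  forall c : 'I_n.+1 -> R, \sum_i c i = 0 -> \sum_i c i *: y i = 0 ->
    forall i, c i = 0.

Definition affine_fun {R : realType} {n : nat} (m : 'rV[R]_n -> R) : Prop :=
  exists (a : R) (c : 'rV[R]_n), forall x, m x = a + dotv c x.

From HB Require Import structures.
From mathcomp Require Import all_boot all_order all_algebra.
From mathcomp Require Import all_classical all_reals.
From mathcomp Require Import topology normedtype derive.
From mathcomp Require Import ring lra.
Import Order.TTheory GRing.Theory Num.Theory.
Import numFieldNormedType.Exports.
Set Implicit Arguments. Unset Strict Implicit. Unset Printing Implicit Defensive.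
Local Open Scope ring_scope.

(* Let p be the first-order Taylor polynomial of f at u. Being affine, p is
   reproduced exactly by barycentric interpolation, so m y0 - f y0 equals
   sum_i ell_i e(y_i) - e(y0) for the linearization error e = f - p. The
   C^{1,1} descent lemma |e(z)| <= L/2 ||z - u||^2 then bounds every term. *)

Section DotProduct.
Variables (R : realType) (n : nat).
Implicit Types (a b x y : 'rV[R]_n) (k : R).

Lemma dotvC a b : dotv a b = dotv b a.
Proof. by apply: eq_bigr => i _; rewrite mulrC. Qed.

Lemma dotvDr a x y : dotv a (x + y) = dotv a x + dotv a y.
Proof. by rewrite /dotv -big_split; apply: eq_bigr => i _; rewrite mxE mulrDr. Qed.

Lemma dotvZr a k x : dotv a (k *: x) = k * dotv a x.
Proof. by rewrite /dotv mulr_sumr; apply: eq_bigr => i _; rewrite mxE mulrCA. Qed.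

Lemma dotv0r a : dotv a 0 = 0.
Proof. by rewrite -(scale0r 0) dotvZr mul0r. Qed.

Lemma dotvBr a x y : dotv a (x - y) = dotv a x - dotv a y.
Proof. by rewrite dotvDr -scaleN1r dotvZr mulN1r. Qed.

Lemma dotvBl a b x : dotv (a - b) x = dotv a x - dotv b x.
Proof. by rewrite dotvC dotvBr !(dotvC x). Qed.

Lemma dotvZl k a x : dotv (k *: a) x = k * dotv a x.
Proof. by rewrite dotvC dotvZr dotvC. Qed.

Lemma dotv_sumr (I : finType) a (w : I -> R) (y : I -> 'rV[R]_n) :
  dotv a (\sum_i w i *: y i) = \sum_i w i * dotv a (y i).
Proof.
rewrite (big_morph (dotv a) (dotvDr a) (dotv0r a)).
by apply: eq_bigr => i _; rewrite dotvZr.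
Qed.

Lemma dotv_ge0 a : 0 <= dotv a a.
Proof. by apply: sumr_ge0 => i _; rewrite -expr2 sqr_ge0. Qed.

Lemma dotv_self_eq0 a x : dotv a a = 0 -> dotv a x = 0.
Proof.
move/eqP; rewrite psumr_eq0 => [/allP a0|i _]; last by rewrite -expr2 sqr_ge0.
rewrite /dotv big1 // => i _.
have : a ord0 i * a ord0 i == 0 by apply: a0; rewrite mem_index_enum.
by rewrite mulf_eq0 orbb => /eqP ->; rewrite mul0r.
Qed.

Lemma dotv_sqr_le a b : dotv a b ^+ 2 <= dotv a a * dotv b b.
Proof.
have [aa0|aa_neq0] := eqVneq (dotv a a) 0.
  by rewrite aa0 dotv_self_eq0 // expr0n mul0r.
have aa_gt0 : 0 < dotv a a by rewrite lt_def aa_neq0 dotv_ge0.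
set t := dotv a b / dotv a a.
have := dotv_ge0 (t *: a - b).
rewrite !dotvBl !dotvBr !dotvZl !dotvZr (dotvC b a) /t.
have -> : dotv a b / dotv a a * (dotv a b / dotv a a * dotv a a)
  - dotv a b / dotv a a * dotv a b
  - (dotv a b / dotv a a * dotv a b - dotv b b)
  = dotv b b - dotv a b ^+ 2 / dotv a a by field.
by rewrite subr_ge0 ler_pdivrMr // mulrC.
Qed.

Lemma normr_dotv_le a b : `|dotv a b| <= enorm a * enorm b.
Proof.
rewrite /enorm -sqrtrM ?dotv_ge0 // -(sqrtr_sqr (dotv a b)).
by rewrite ler_sqrt ?dotv_sqr_le // mulr_ge0 ?dotv_ge0.
Qed.

Lemma enorm_ge0 a : 0 <= enorm a.
Proof. exact: sqrtr_ge0. Qed.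

Lemma enormZ k a : enorm (k *: a) = `|k| * enorm a.
Proof.
rewrite /enorm dotvZl dotvZr mulrA sqrtrM; last by rewrite -expr2 sqr_ge0.
by rewrite -expr2 sqrtr_sqr.
Qed.

End DotProduct.

Section Differential.
Variables (R : realType) (n : nat) (f : 'rV[R]_n -> R).

Lemma diff_dotv_gradient x (d : 'rV[R]_n) : 'd f x d = dotv (gradient f x) d.
Proof.
rewrite {1}(matrix_sum_delta d) big_ord1 linear_sum /dotv.
apply: eq_bigr => j _.
by rewrite (ord1 ord0) linearZ /= mxE mulrC.
Qed.

Lemma is_derive_along_line (u d : 'rV[R]_n) (t : R) :
  (forall x, differentiable f x) ->
  is_derive t (1 : R) (fun s : R => f (u + s *: d)) ('d f (u + t *: d) d).
Proof.
move=> df.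
have dline : differentiable (fun s : R => u + s *: d) t by exact: ex_diff.
apply: DeriveDef.
  by apply: diff_derivable; exact: differentiable_comp.
rewrite deriveE; last exact: differentiable_comp.
rewrite diff_comp //=.
have -> : 'd (fun s : R => u + s *: d) t = 0 + *:%R^~ d :> (R -> _).
  exact: diff_val.
by rewrite /= add0r scale1r.
Qed.

End Differential.

Section DescentLemma.
Variables (R : realType) (n : nat) (L : R) (f : 'rV[R]_n -> R).
Hypothesis hf : C11 L f.

Lemma C11_diff_gradient_le (u d : 'rV[R]_n) (c : R) : 0 <= c ->
  `|'d f (u + c *: d) d - dotv (gradient f u) d| <= L * c * enorm d ^+ 2.
Proof.
move=> c_ge0; case: hf => _ lip.
rewrite diff_dotv_gradient -dotvBl.
apply: le_trans (normr_dotv_le _ _) _.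
rewrite expr2 mulrA ler_wpM2r ?enorm_ge0 //.
have := lip (u + c *: d) u.
have -> : u + c *: d - u = c *: d by rewrite addrC addKr.
by rewrite enormZ ger0_norm // mulrA.
Qed.

(* The sign s lets one mean-value argument give both sides of the bound. *)
Lemma C11_signed_linearization_le (s : R) (u d : 'rV[R]_n) : `|s| = 1 ->
  s * (f (u + d) - f u - dotv (gradient f u) d) <= L / 2 * enorm d ^+ 2.
Proof.
move=> s_unit; case: (hf) => df _.
set G := dotv (gradient f u) d; set D := enorm d ^+ 2.
pose phi t := f (u + t *: d).
pose h := (s \*: phi) - ((s * G) \*: (id : R -> R))
          - ((L / 2 * D) \*: ((id : R -> R) * id)).
pose dh t := s *: 'd f (u + t *: d) d - (s * G) *: 1 - (L / 2 * D) *: (t *: 1 + t *: 1).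
have h_derive t : is_derive t (1 : R) h (dh t).
  apply: is_deriveB; apply: is_deriveB => //.
  exact: (is_deriveZ s (is_derive_along_line u d t df)).
have h_derivable t : derivable h t (1 : R) by apply: ex_derive; exact: h_derive.
have h_cont := @derivable_within_continuous R R h `[0, 1]%R (fun t _ => h_derivable t).
have [c /[!in_itv] /= /andP[c_gt0 _] h_mvt] := MVT ltr01 (fun t _ => h_derive t) h_cont.
have h1 : h 1 = s * f (u + d) - s * G - L / 2 * D.
  rewrite -[LHS]/(s * f (u + 1 *: d) - (s * G) * 1 - (L / 2 * D) * (1 * 1)).
  by rewrite scale1r !mulr1.
have h0 : h 0 = s * f u.
  rewrite -[LHS]/(s * f (u + 0 *: d) - (s * G) * 0 - (L / 2 * D) * (0 * 0)).
  by rewrite scale0r addr0 !mulr0 !subr0.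
have dh_c : dh c * (1 - 0) = s * ('d f (u + c *: d) d - G) - L * c * D.
  rewrite -[dh c]/(s * 'd f (u + c *: d) d - (s * G) * 1
                   - (L / 2 * D) * (c * 1 + c * 1)).
  by rewrite subr0 !mulr1; field.
have dh_c_le : s * ('d f (u + c *: d) d - G) <= L * c * D.
  apply: le_trans (ler_norm _) _.
  by rewrite normrM s_unit mul1r C11_diff_gradient_le ?ltW.
rewrite h1 h0 dh_c in h_mvt.
by move: h_mvt dh_c_le; lra.
Qed.

Lemma C11_linearization_error (u z : 'rV[R]_n) :
  `|f z - (f u + dotv (gradient f u) (z - u))| <= L / 2 * enorm (z - u) ^+ 2.
Proof.
have uzE : u + (z - u) = z by rewrite addrC subrK.
rewrite opprD addrA ler_norml lerNl.
have := C11_signed_linearization_le u (z - u) (normr1 R).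
have := C11_signed_linearization_le u (z - u) (normrN1 R).
by rewrite uzE mul1r mulN1r => -> ->.
Qed.

End DescentLemma.

Section Barycentric.
Variables (R : realType) (n : nat) (I : finType).
Variables (y : I -> 'rV[R]_n) (ell : I -> R).
Hypothesis ell_sum1 : \sum_i ell i = 1.

Lemma affine_fun_barycentric (p : 'rV[R]_n -> R) : affine_fun p ->
  p (\sum_i ell i *: y i) = \sum_i ell i * p (y i).
Proof.
move=> [a [c pE]]; rewrite pE dotv_sumr.
under [RHS]eq_bigr do rewrite pE mulrDr.
by rewrite big_split /= -mulr_suml ell_sum1 mul1r.
Qed.

(* Any affine p can be subtracted from both the data and the target. *)
Lemma barycentric_interpolation_error (f m p : 'rV[R]_n -> R) :
  affine_fun m -> affine_fun p -> (forall i, m (y i) = f (y i)) ->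
  m (\sum_i ell i *: y i) - f (\sum_i ell i *: y i) =
  \sum_i ell i * (f (y i) - p (y i)) - (f (\sum_i ell i *: y i) - p (\sum_i ell i *: y i)).
Proof.
move=> m_aff p_aff my.
rewrite (affine_fun_barycentric m_aff) (affine_fun_barycentric p_aff).
under eq_bigr do rewrite my.
by rewrite (eq_bigr _ (fun i _ => mulrBr _ _ _)) sumrB; ring.
Qed.

End Barycentric.

Lemma taylor1_affine (R : realType) (n : nat) (a : R) (g u : 'rV[R]_n) :
  affine_fun (fun z => a + dotv g (z - u)).
Proof.
by exists (a - dotv g u), g => z; rewrite dotvBr addrA addrAC.
Qed.

Theorem theorem3p1 (R : realType) (n : nat) (L : R) (f : 'rV[R]_n -> R)
  (y : 'I_n.+1 -> 'rV[R]_n) (m : 'rV[R]_n -> R) (y0 : 'rV[R]_n)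
  (ell : 'I_n.+1 -> R) :
  (0 < n)%N -> 0 < L -> C11 L f -> affinely_independent y ->
  affine_fun m -> (forall i, m (y i) = f (y i)) ->
  \sum_i ell i = 1 -> \sum_i ell i *: y i = y0 ->
  forall u : 'rV[R]_n,
    `|m y0 - f y0| <=
      L / 2 * (`|-1 : R| * enorm (y0 - u) ^+ 2
               + \sum_i `|ell i| * enorm (y i - u) ^+ 2).
Proof.
move=> _ _ hf _ m_aff my ell_sum1 <- u.
have p_aff := taylor1_affine (f u) (gradient f u) u.
rewrite (barycentric_interpolation_error ell_sum1 m_aff p_aff my).
rewrite normrN1 mul1r mulrDr.
apply: le_trans (ler_normD _ _) _; rewrite normrN [leRHS]addrC; apply: lerD.
  rewrite mulr_sumr; apply: le_trans (ler_norm_sum _ _ _) _.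
  apply: ler_sum => i _; rewrite normrM mulrCA ler_wpM2l //.
  exact: (C11_linearization_error hf).
exact: (C11_linearization_error hf).
Qed.
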